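(* A finite simple graph $G$ is a caterpillar forest (every connected component is a caterpillar, i.e. a tree in which removing all leaves leaves a path) if and only if it admits a $CF$-free circular ordering.
   Context: A circular ordering of a finite set is obtained by placing its elements at distinct points of a circle. A circularly ordered graph is a graph with a circular ordering of its vertices; isomorphism means a graph isomorphism preserving circular orderings; induced circularly ordered subgraphs are induced subgraphs with the restricted ordering. A circular ordering $C$ of $V(G)$ is $CF$-free if no induced circularly ordered subgraph of $(G,C)$ is isomorphic to a member of $CF$. $CF$ consists of the following circularly ordered graphs (vertices $v_1,v_2,\dots$ clockwise in this order; listed edges are all edges): the triangle on $v_1,v_2,v_3$; on $v_1,\dots,v_4$: edges $v_1v_2,v_2v_3,v_3v_4,v_4v_1$; edges $v_1v_2,v_2v_4,v_4v_3,v_3v_1$; edges $v_1v_2,v_2v_3,v_3v_4$; edges $v_3v_1,v_1v_4,v_4v_2$. *)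

From mathcomp Require Import all_boot.
Set Implicit Arguments. Unset Strict Implicit. Unset Printing Implicit Defensive.

Definition simple_graph (T : finType) (e : rel T) : Prop :=
  symmetric e /\ irreflexive e.

Section Graphs.
Variables (T : finType) (e : rel T).

Definition nbhd (x : T) : {set T} := [set y | e x y].
Definition deg (x : T) : nat := #|nbhd x|.

Definition induced (C : {set T}) : rel T :=
  fun a b => [&& e a b, a \in C & b \in C].

Definition has_cycle_in (C : {set T}) : Prop :=
  exists c : seq T, [/\ uniq c, 3 <= size c, cycle e c & all (fun x => x \in C) c].

Definition induces_tree (C : {set T}) : Prop :=
  [/\ C != set0,
      (forall u v, u \in C -> v \in C -> connect (induced C) u v)
    & ~ has_cycle_in C].

Definition component (x : T) : {set T} := [set y | connect e x y].

Definition nonleaves (C : {set T}) : {set T} := [set x in C | deg x != 1].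

Definition consec (p : seq T) (u v : T) : bool :=
  [&& u \in p, v \in p &
      ((index u p).+1 == index v p) || ((index v p).+1 == index u p)].

Definition induces_path (S : {set T}) : Prop :=
  exists p : seq T, [/\ uniq p, S = [set x in p] &
      forall u v, u \in S -> v \in S -> e u v = consec p u v].

Definition caterpillar (C : {set T}) : Prop :=
  induces_tree C /\ induces_path (nonleaves C).

Definition caterpillar_forest : Prop :=
  forall x : T, caterpillar (component x).

(** Circular orderings: represented by an injective labelling f : T -> nat;
    vertices are placed clockwise in increasing order of f. *)
Definition clockwise (f : T -> nat) (s : seq T) : Prop :=
  exists i, sorted ltn (rot i (map f s)).

(** A circularly ordered pattern on vertices v_1..v_k (here indexed 0..k-1,
    clockwise) with edge list es. *)
Definition pat_adj (es : seq (nat * nat)) (i j : nat) : bool :=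
  ((i, j) \in es) || ((j, i) \in es).

Definition contains_pattern (f : T -> nat) (k : nat) (es : seq (nat * nat))
  : Prop :=
  exists g : 'I_k -> T, [/\ injective g,
    clockwise f [seq g i | i <- enum 'I_k] &
    forall i j : 'I_k, e (g i) (g j) = pat_adj es i j].

(** The family CF (vertex v_m is index m-1). *)
Definition CF : seq (nat * seq (nat * nat)) :=
  [:: (3, [:: (0,1); (1,2); (2,0)]);
      (4, [:: (0,1); (1,2); (2,3); (3,0)]);
      (4, [:: (0,1); (1,3); (3,2); (2,0)]);
      (4, [:: (0,1); (1,2); (2,3)]);
      (4, [:: (2,0); (0,3); (3,1)])].

Definition CF_free_circular_ordering (f : T -> nat) : Prop :=
  injective f /\
  forall H, H \in CF -> ~ contains_pattern f H.1 H.2.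
End Graphs.

From mathcomp Require Import all_boot zify.
Set Implicit Arguments. Unset Strict Implicit. Unset Printing Implicit Defensive.

(* A CF-free circular ordering forbids triangles and 4-cycles, and for every
   induced path a-b-c-d it forces the chord bc to separate a from d.  Along a
   chordless cycle of length at least 5 these separations wind around the
   circle and cannot close up, so a shortest cycle does not exist.  If a vertex
   v had three non-leaf neighbours, each of them, say x, would have a further
   neighbour x' separated by the chord vx from the other two; for the middle
   one of the three on the circle this is impossible.  Hence every component is
   a tree whose non-leaves form a path.
   Conversely, place the spine of each caterpillar in a zigzag and every leaf
   next to the successor of its neighbour: then every induced path on four
   vertices has separated ends, and the other members of CF contain cycles. *)

(** * Cyclic order on [nat] *)

Definition cyclic3 (x y z : nat) : bool := [|| x < y < z, y < z < x | z < x < y].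
Definition cyclic4 (x y z w : nat) : bool := cyclic3 x y z && cyclic3 x z w.
Definition separates (u v w z : nat) : bool := cyclic4 u w v z || cyclic4 u z v w.

Lemma cyclic3_total x y z : x != y -> y != z -> z != x -> cyclic3 x y z || cyclic3 x z y.
Proof. rewrite /cyclic3; lia. Qed.

Lemma cyclic4_rot x y z w : cyclic4 x y z w -> cyclic4 y z w x.
Proof. rewrite /cyclic4 /cyclic3; lia. Qed.

Lemma cyclic3_insert x y z w : cyclic3 x y z -> w != x -> w != y -> w != z ->
  [|| cyclic4 x w y z, cyclic4 x y w z | cyclic4 x y z w].
Proof. rewrite /cyclic4 /cyclic3; lia. Qed.

Lemma cyclic4_uniq x y z w : cyclic4 x y z w -> uniq [:: x; y; z; w].
Proof. rewrite /cyclic4 /cyclic3 /= !inE; lia. Qed.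

Lemma cyclic4_cases x y z w : uniq [:: x; y; z; w] ->
  [|| cyclic4 x y z w, cyclic4 x y w z, cyclic4 x z y w,
      cyclic4 x z w y, cyclic4 x w y z | cyclic4 x w z y].
Proof.
rewrite /= !inE !negb_or => /and4P[/and3P[xy xz xw] /andP[yz yw] zw _].
have [wx wy wz] : [/\ w != x, w != y & w != z] by rewrite !(eq_sym w).
have zx : z != x by rewrite eq_sym.
case/orP: (cyclic3_total xy yz zx).
  by move=> /cyclic3_insert/(_ wx wy wz)/or3P[]->; rewrite ?orbT.
by move=> /cyclic3_insert/(_ wx wz wy)/or3P[]->; rewrite ?orbT.
Qed.

Lemma separatesC u v w z : separates u v w z = separates v u w z.
Proof. rewrite /separates /cyclic4 /cyclic3; lia. Qed.

Lemma separatesCr u v w z : separates u v w z = separates u v z w.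
Proof. by rewrite /separates orbC. Qed.

Lemma separates_chain u v x w z :
  separates u v x w -> separates v w u z -> separates u v x z.
Proof. rewrite /separates /cyclic4 /cyclic3; lia. Qed.

Lemma separates_same_side u v w z y :
  separates u v w y -> separates u v z y -> ~~ separates u v w z.
Proof. rewrite /separates /cyclic4 /cyclic3; lia. Qed.

Lemma separates_middle v a b c : uniq [:: v; a; b; c] ->
  [|| separates v a b c, separates v b a c | separates v c a b].
Proof.
move=> /cyclic4_cases; rewrite /separates.
by case/or3P => [|| /or4P[]] ->; rewrite ?orbT.
Qed.

Lemma cyclic4_not_separates x y z w : cyclic4 x y z w -> ~~ separates y z x w.
Proof. rewrite /separates /cyclic4 /cyclic3; lia. Qed.

Lemma separatesxx u v w : separates u v w w = false.
Proof. rewrite /separates /cyclic4 /cyclic3; lia. Qed.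

Lemma separates_winding (x : nat -> nat) n : 3 <= n ->
  (forall k, k + 3 <= n -> separates (x k.+1) (x k.+2) (x k) (x k.+3)) ->
  x n != x 0.
Proof.
move=> n3 window.
have wind j k : 3 <= j -> k + j <= n ->
    separates (x k.+1) (x k.+2) (x k) (x (k + j)).
  elim: j k => // j IH k; rewrite ltnS leq_eqVlt => /orP[/eqP<- | j3] kjn.
    by rewrite addn3; apply: window.
  apply: separates_chain (window k _) _; first by lia.
  by rewrite -addSnnS; apply: IH; rewrite // addSnnS.
by apply/eqP => xn0; have := wind n 0 n3 (leqnn n); rewrite add0n xn0 separatesxx.
Qed.

Section Patterns.
Variables (T : finType) (e : rel T) (f : T -> nat).

Lemma clockwise3 a b c : clockwise f [:: a; b; c] <-> cyclic3 (f a) (f b) (f c).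
Proof.
rewrite /cyclic3; split=> [[[|[|[|i]]]] | abc].
all: try by rewrite ?(@rot_oversize _ i.+3) //=; lia.
have /or3P[] : [|| f a < f b < f c, f b < f c < f a | f c < f a < f b] by [].
- by exists 0 => /=; lia.
- by exists 1 => /=; lia.
- by exists 2 => /=; lia.
Qed.

Lemma clockwise4 a b c d :
  clockwise f [:: a; b; c; d] <-> cyclic4 (f a) (f b) (f c) (f d).
Proof.
rewrite /cyclic4 /cyclic3; split=> [[[|[|[|[|i]]]]] | abcd].
all: try by rewrite ?(@rot_oversize _ i.+4) //=; lia.
have /or4P[] : [|| [&& f a < f b, f b < f c & f c < f d],
                   [&& f b < f c, f c < f d & f d < f a],
                   [&& f c < f d, f d < f a & f a < f b]
                 | [&& f d < f a, f a < f b & f b < f c]] by lia.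
- by exists 0 => /=; lia.
- by exists 1 => /=; lia.
- by exists 2 => /=; lia.
- by exists 3 => /=; lia.
Qed.

Lemma contains_pattern_of_seq k es (s : seq T) x0 :
  uniq s -> size s = k -> clockwise f s ->
  (forall i j, i < k -> j < k -> e (nth x0 s i) (nth x0 s j) = pat_adj es i j) ->
  contains_pattern e f k es.
Proof.
move=> s_uniq <- s_cw s_adj; exists (fun i : 'I_(size s) => nth x0 s i); split=> //.
- by move=> i j /eqP; rewrite nth_uniq // => /eqP/val_inj.
- by rewrite (map_comp (nth x0 s) val) val_enum_ord -/(mkseq _ _) mkseq_nth.
- by move=> i j; apply: s_adj.
Qed.

Lemma contains_patternP k es : contains_pattern e f k es ->
  exists2 s : seq T, [/\ uniq s, size s = k & clockwise f s] &
    forall x0 i j, i < k -> j < k -> e (nth x0 s i) (nth x0 s j) = pat_adj es i j.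
Proof.
case=> g [g_inj g_cw g_adj]; exists (map g (enum 'I_k)).
  by rewrite map_inj_uniq ?enum_uniq // size_map size_enum_ord.
move=> x0 i j ik jk.
rewrite (nth_map (Ordinal ik)) ?size_enum_ord // (nth_map (Ordinal ik)) ?size_enum_ord //.
by rewrite g_adj !nth_enum_ord.
Qed.

End Patterns.

Section Graph.
Variables (T : finType) (e : rel T).
Hypothesis e_sym : symmetric e.

Definition graph_cycle (c : seq T) : bool := [&& uniq c, 2 < size c & cycle e c].

Lemma graph_cycle_rot n c : graph_cycle (rot n c) = graph_cycle c.
Proof. by rewrite /graph_cycle rot_uniq size_rot rot_cycle. Qed.

Lemma graph_cycle_chord a b p q :
  graph_cycle (a :: p ++ b :: q) -> e a b -> q != [::] -> graph_cycle [:: a, b & q].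
Proof.
case/and3P=> c_uniq _ c_cycle ab q0; apply/and3P; split.
- by apply: subseq_uniq c_uniq; rewrite /= eqxx suffix_subseq.
- by rewrite /= !ltnS lt0n size_eq0.
- by move: c_cycle; rewrite /= rcons_cat cat_path /= ab => /and3P[].
Qed.

Lemma shortest_cycle_chordless a b c d r :
  graph_cycle [:: a, b, c, d & r] -> r != [::] ->
  (forall s, graph_cycle s -> size [:: a, b, c, d & r] <= size s) ->
  [/\ ~~ e a c, ~~ e b d & ~~ e a d].
Proof.
move=> cyc r0 shortest; split; apply/negP => chord.
- have := shortest _ (graph_cycle_chord (p := [:: b]) cyc chord isT); rewrite /=; lia.
- have cyc1 : graph_cycle [:: b, c, d & rcons r a].
    by rewrite -(graph_cycle_rot 1) rot1_cons in cyc.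
  have := shortest _ (graph_cycle_chord (p := [:: c]) cyc1 chord _).
  by rewrite -size_eq0 size_rcons /= size_rcons => /(_ isT); lia.
- have := shortest _ (graph_cycle_chord (p := [:: b; c]) cyc chord r0); rewrite /=; lia.
Qed.

Lemma sorted_chord_cycle (p : seq T) x0 i j : uniq p -> sorted e p ->
  i.+1 < j < size p -> e (nth x0 p j) (nth x0 p i) ->
  graph_cycle (drop i (take j.+1 p)).
Proof.
move=> p_uniq p_sorted /andP[ij jp] ji; set c := drop i (take j.+1 p).
have size_c : size c = j.+1 - i by rewrite size_drop size_takel.
have head_c : c = nth x0 p i :: drop i.+1 (take j.+1 p).
  by rewrite /c (drop_nth x0) ?size_takel ?nth_take //; lia.
have last_c : last x0 c = nth x0 p j.
  by rewrite -nth_last size_c nth_drop nth_take; [congr nth; lia | lia].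
apply/and3P; split; first by rewrite drop_uniq ?take_uniq.
  by rewrite size_c; lia.
rewrite (cycle_path x0) last_c {1}head_c /= ji /=.
by have := drop_sorted i (take_sorted j.+1 p_sorted); rewrite -/c head_c.
Qed.

Lemma mem_component x y : (y \in component e x) = connect e x y.
Proof. by rewrite inE. Qed.

Lemma component_eq x y : y \in component e x -> component e y = component e x.
Proof.
rewrite mem_component => xy; apply/setP => z; rewrite !mem_component.
by rewrite (same_connect (sym_connect_sym e_sym) xy z).
Qed.

Lemma component_edge x y : e x y -> component e y = component e x.
Proof. by move=> xy; apply: component_eq; rewrite mem_component connect1. Qed.

Lemma induced_sym (A : {set T}) : symmetric (induced e A).
Proof. by move=> a b; rewrite /induced e_sym [(a \in A) && _]andbC. Qed.

Lemma component_closed x y z : y \in component e x -> e y z -> z \in component e x.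
Proof. by rewrite !mem_component => xy /connect1; apply: connect_trans. Qed.

Lemma path_induced (A : {set T}) x q :
  (forall y z, y \in A -> e y z -> z \in A) ->
  x \in A -> path e x q -> path (induced e A) x q.
Proof.
move=> A_closed; elim: q x => //= y q IH x xA /andP[xy yq].
by rewrite /induced xy xA (A_closed x y) // IH // (A_closed x y).
Qed.

Lemma component_connected x u v : u \in component e x -> v \in component e x ->
  connect (induced e (component e x)) u v.
Proof.
suff from_x w : w \in component e x -> connect (induced e (component e x)) x w.
  move=> /from_x xu /from_x xv; apply: connect_trans xv.
  by rewrite (sym_connect_sym (@induced_sym _)).
rewrite mem_component => /connectP[q xq ->]; apply/connectP; exists q => //.
by apply: path_induced xq; [exact: component_closed | rewrite mem_component].
Qed.

Lemma deg_neq1 y a b : e y a -> e y b -> a != b -> deg e y != 1.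
Proof.
move=> ya yb; apply: contra => /cards1P[z yz].
have: a \in nbhd e y by rewrite inE.
have: b \in nbhd e y by rewrite inE.
by rewrite yz !inE => /eqP-> /eqP->.
Qed.

Lemma other_neighbour y v : deg e y != 1 -> e y v -> exists2 w, e y w & w != v.
Proof.
move=> dy yv; case: (pickP [pred w | e y w && (w != v)]) => [w /andP[]|none].
  by exists w.
case/negP: dy; apply/cards1P; exists v; apply/setP => w; rewrite !inE.
by case: eqP => [->|/eqP wv] //; have := none w; rewrite /= wv andbT => ->.
Qed.

Lemma leaf_edge x y : deg e x = 1 -> e x y -> e x =1 pred1 y.
Proof.
move=> /eqP/cards1P[w xw] xy z.
have nbhdE u : (u \in nbhd e x) = e x u by rewrite inE.
by move: xy; rewrite -!nbhdE xw !inE => /eqP->.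
Qed.

End Graph.

(** * Acyclic graphs whose claws have a leaf are caterpillar forests *)

Lemma longest_seq (T : finType) (P : pred (seq T)) s0 :
  P s0 -> (forall s, P s -> uniq s) ->
  exists2 s, P s & forall s', P s' -> size s' <= size s.
Proof.
move=> Ps0 P_uniq; pose Q n := [exists t : n.-tuple T, P t].
have Q_size s : P s -> Q (size s) by move=> Ps; apply/existsP; exists (in_tuple s).
have Q_bound n : Q n -> n <= #|T|.
  by case/existsP=> t /P_uniq/card_uniqP; rewrite size_tuple => <-; apply: max_card.
case: (ex_maxnP (ex_intro Q _ (Q_size s0 Ps0)) Q_bound) => n /existsP[t Pt] Q_max.
by exists t => // s /Q_size/Q_max; rewrite size_tuple.
Qed.

Lemma shortest_seq (T : finType) (P : pred (seq T)) s0 :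
  P s0 -> exists2 s, P s & forall s', P s' -> size s <= size s'.
Proof.
move=> Ps0; pose Q n := [exists t : n.-tuple T, P t].
have Q_size s : P s -> Q (size s) by move=> Ps; apply/existsP; exists (in_tuple s).
case: (ex_minnP (ex_intro Q _ (Q_size s0 Ps0))) => n /existsP[t Pt] Q_min.
by exists t => // s /Q_size/Q_min; rewrite size_tuple.
Qed.

Section Forest.
Variables (T : finType) (e : rel T).
Hypotheses (e_sym : symmetric e) (e_irr : irreflexive e).
Hypothesis acyclic : forall c, ~~ graph_cycle e c.
Hypothesis claw_has_leaf : forall v a b c, e v a -> e v b -> e v c ->
  uniq [:: a; b; c] -> [|| deg e a == 1, deg e b == 1 | deg e c == 1].

Lemma sorted_consec (p : seq T) :
  uniq p -> sorted e p -> {in p &, forall u v, e u v = consec p u v}.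
Proof.
move=> p_uniq p_sorted u v up vp; rewrite /consec up vp /=.
wlog uv : u v up vp / index u p <= index v p.
  move=> wlog_uv; case: (leqP (index u p) (index v p)) => [|/ltnW]; first exact: wlog_uv.
  by move=> vu; rewrite e_sym orbC; apply: wlog_uv.
have -> : ((index v p).+1 == index u p) = false by lia.
rewrite orbF.
have [uv1|uv1] := eqVneq (index u p).+1 (index v p).
  move/(sortedP u): p_sorted => /(_ (index u p)).
  by rewrite uv1 index_mem !nth_index // => /(_ vp).
have [->|vu] := eqVneq v u; first by rewrite e_irr.
have iuv : index u p != index v p.
  by apply: contraNneq vu => iuv; rewrite -(nth_index u vp) -iuv nth_index.
have uv2 : (index u p).+1 < index v p by lia.
apply/negbTE/negP => euv.
case/negP: (acyclic (drop (index u p) (take (index v p).+1 p))).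
by apply: (sorted_chord_cycle (x0 := u)) => //; rewrite ?uv2 ?index_mem ?nth_index // e_sym.
Qed.

Lemma component_induces_tree x : induces_tree e (component e x).
Proof.
split; first by apply/set0Pn; exists x; rewrite mem_component connect0.
  exact: component_connected.
by case=> c [c_uniq c_size c_cycle _]; case/negP: (acyclic c); apply/and3P.
Qed.

Section Spine.
Variable x : T.
Let S := nonleaves e (component e x).

Lemma mem_nonleaves y : (y \in S) = (y \in component e x) && (deg e y != 1).
Proof. by rewrite inE. Qed.

Lemma path_nonleaves u q : u \in S -> uniq (u :: q) -> path e u q ->
  last u q \in S -> path (induced e S) u q.
Proof.
elim: q u => //= y q IH u uS /andP[uNq q_uniq] /andP[uy yq] lastS.
have yS : y \in S.
  case: q {IH q_uniq} uNq yq lastS => [_ _ //|z q uNq /andP[yz _] _].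
  move: uS; rewrite !mem_nonleaves => /andP[ux _]; rewrite (component_closed ux uy).
  apply: (deg_neq1 (a := u) (b := z)) => //; first by rewrite e_sym.
  by apply: contraNneq uNq => ->; rewrite !inE eqxx orbT.
by rewrite /induced uy uS yS IH.
Qed.

Lemma nonleaves_connected u v : u \in S -> v \in S -> connect (induced e S) u v.
Proof.
move=> uS vS; have: connect e u v.
  move: uS vS; rewrite !mem_nonleaves !mem_component => /andP[xu _] /andP[xv _].
  by apply: connect_trans xv; rewrite (sym_connect_sym e_sym).
case/connectP=> q uq vq; move: vS; rewrite vq.
case: (shortenP uq) => q' uq' q'_uniq _ lastS.
by apply/connectP; exists q' => //; apply: path_nonleaves.
Qed.

Definition nonleaf_path (s : seq T) : bool :=
  [&& uniq s, sorted e s & all (fun y => y \in S) s].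

Lemma nonleaf_path_rev s : nonleaf_path (rev s) = nonleaf_path s.
Proof.
rewrite /nonleaf_path rev_uniq all_rev rev_sorted.
by rewrite (@eq_sorted _ _ e) // => u v; rewrite /= e_sym.
Qed.

Lemma nonleaf_path_cons z s : nonleaf_path s -> z \in S -> z \notin s ->
  e z (head z s) -> nonleaf_path (z :: s).
Proof.
case/and3P=> s_uniq s_sorted s_S zS zNs zs.
rewrite /nonleaf_path /= zNs s_uniq zS s_S andbT.
by case: s {s_uniq s_S zNs} s_sorted zs => //= y s -> ->.
Qed.

Lemma longest_nonleaf_path_closed p w z : nonleaf_path p ->
  (forall q, nonleaf_path q -> size q <= size p) ->
  w \in p -> z \in S -> e w z -> z \in p.
Proof.
move=> pP longest wp zS wz; apply/negPn/negP => zNp.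
have extend s : nonleaf_path s -> size s = size p -> z \notin s -> e z (head z s) -> False.
  move=> sP sp zNs zs; have := longest _ (nonleaf_path_cons sP zS zNs zs).
  by rewrite /= sp ltnn.
move: extend pP zNp; case/splitPr: wp => p1 p2 extend pP zNp.
case: p2 => [|b p2] in extend pP zNp *.
  rewrite cats1 in extend pP zNp; apply: (extend (rev (rcons p1 w))).
  - by rewrite nonleaf_path_rev.
  - by rewrite size_rev.
  - by rewrite mem_rev.
  - by rewrite rev_rcons /= e_sym.
case/lastP: p1 => [|p1 a] in extend pP zNp *.
  apply: (extend [:: w, b & p2]) => //.
  by rewrite /= e_sym.
rewrite cat_rcons in pP zNp; case/and3P: pP.
rewrite cat_uniq sorted_cat_cons all_cat /= => /and3P[_ _ /andP[aNp _]].
case/andP=> _ /and3P[aw wb _] /and3P[_ aS /and3P[_ bS _]].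
move: zNp; rewrite mem_cat !inE !negb_or => /andP[_ /and4P[za _ zb _]].
have nonleaf y : y \in S -> (deg e y == 1) = false.
  by rewrite mem_nonleaves => /andP[_ /negbTE].
have abz : uniq [:: a; b; z].
  rewrite /= !inE !negb_or (eq_sym a z) (eq_sym b z) za zb !andbT.
  by apply: contraNneq aNp => ->; rewrite !inE eqxx orbT.
have wa : e w a by rewrite e_sym.
by have := claw_has_leaf wa wb wz abz; rewrite !nonleaf.
Qed.

Lemma nonleaves_induce_path : induces_path e S.
Proof.
have [S0|[y0 y0S]] := set_0Vmem S.
  by exists [::]; split=> // u v; rewrite S0 inE.
have y0P : nonleaf_path [:: y0] by rewrite /nonleaf_path /= y0S.
have [p pP longest] : exists2 p, nonleaf_path p & forall q, nonleaf_path q -> size q <= size p.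
  by apply: longest_seq y0P _ => s /and3P[].
have /and3P[p_uniq p_sorted /allP p_S] := pP.
have p_closed : closed (induced e S) p.
  apply: (intro_closed (sym_connect_sym (induced_sym e_sym S))).
  move=> u v /and3P[uv _ vS] up.
  exact: longest_nonleaf_path_closed pP longest up vS uv.
have wp : head y0 p \in p by rewrite -nth0 mem_nth // (longest _ y0P).
have Sp : S = [set y in p].
  apply/setP => u; rewrite inE; apply/idP/idP => [uS|/p_S //].
  by rewrite -(closed_connect p_closed (nonleaves_connected (p_S _ wp) uS)).
by exists p; split=> // u v; rewrite Sp !inE; apply: sorted_consec.
Qed.

End Spine.

Lemma acyclic_caterpillar_forest : caterpillar_forest e.
Proof. by move=> x; split; [exact: component_induces_tree | exact: nonleaves_induce_path]. Qed.

End Forest.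

(** * CF-free orderings *)

Notation cf_triangle := [:: (0, 1); (1, 2); (2, 0)].
Notation cf_square := [:: (0, 1); (1, 2); (2, 3); (3, 0)].
Notation cf_crossed_square := [:: (0, 1); (1, 3); (3, 2); (2, 0)].
Notation cf_path := [:: (0, 1); (1, 2); (2, 3)].
Notation cf_crossed_path := [:: (2, 0); (0, 3); (3, 1)].

Section CFFree.
Variables (T : finType) (e : rel T) (f : T -> nat).
Hypotheses (e_sym : symmetric e) (e_irr : irreflexive e) (f_inj : injective f).
Hypothesis CF_free : forall H, H \in CF -> ~ contains_pattern e f H.1 H.2.

Local Ltac pattern_adjacency :=
  case=> [|[|[|[|?]]]] [|[|[|[|?]]]] //= _ _; rewrite /pat_adj !inE /= ?e_irr //;
  by rewrite e_sym.

Lemma edge_neq x y : e x y -> x != y.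
Proof. by apply: contraTneq => ->; rewrite e_irr. Qed.

Lemma uniq_map_f (s : seq T) : uniq s -> uniq (map f s).
Proof. by rewrite (map_inj_uniq f_inj). Qed.

Lemma no_CF_pattern4 es a b c d : (4, es) \in CF -> cyclic4 (f a) (f b) (f c) (f d) ->
  (forall i j, i < 4 -> j < 4 ->
     e (nth a [:: a; b; c; d] i) (nth a [:: a; b; c; d] j) = pat_adj es i j) ->
  False.
Proof.
move=> es_CF abcd adj; apply: (CF_free es_CF).
apply: contains_pattern_of_seq adj => //; last exact/clockwise4.
exact: (@map_uniq _ _ f [:: a; b; c; d] (cyclic4_uniq abcd)).
Qed.

Lemma no_triangle a b c : e a b -> e b c -> e c a -> False.
Proof.
wlog abc : b c / cyclic3 (f a) (f b) (f c).
  move=> wlog_abc ab bc ca.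
  have fneq x y : e x y -> f x != f y by move/edge_neq; rewrite (inj_eq f_inj).
  case/orP: (cyclic3_total (fneq _ _ ab) (fneq _ _ bc) (fneq _ _ ca)) => [abc|acb].
    exact: wlog_abc abc ab bc ca.
  by apply: (wlog_abc c b); rewrite // e_sym.
move=> ab bc ca; apply: (CF_free (H := (3, cf_triangle))); first by rewrite inE eqxx.
apply: (contains_pattern_of_seq (s := [:: a; b; c]) (x0 := a)) => //.
- by apply: (@map_uniq _ _ f [:: a; b; c]); move: abc; rewrite /cyclic3 /= !inE; lia.
- exact/clockwise3.
- pattern_adjacency.
Qed.

Lemma square_not_in_order x y z w : e x y -> e y z -> e z w -> e w x ->
  ~~ cyclic4 (f x) (f y) (f z) (f w).
Proof.
move=> xy yz zw wx; apply/negP => xyzw.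
have xz : e x z = false by apply/negP => xz; apply: (no_triangle xz zw wx).
have yw : e y w = false by apply/negP => yw; apply: (no_triangle yw wx xy).
apply: (no_CF_pattern4 (es := cf_square)) xyzw _; first by rewrite !inE eqxx orbT.
pattern_adjacency.
Qed.

Lemma square_not_crossed x y z w : e x y -> e y z -> e z w -> e w x ->
  ~~ cyclic4 (f x) (f y) (f w) (f z).
Proof.
move=> xy yz zw wx; apply/negP => xywz.
have xz : e x z = false by apply/negP => xz; apply: (no_triangle xz zw wx).
have yw : e y w = false by apply/negP => yw; apply: (no_triangle yw wx xy).
apply: (no_CF_pattern4 (es := cf_crossed_square)) xywz _; first by rewrite !inE eqxx !orbT.
pattern_adjacency.
Qed.

Lemma no_square a b c d : e a b -> e b c -> e c d -> e d a -> a != c -> b != d -> False.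
Proof.
move=> ab bc cd da ac bd.
have abcd : uniq [:: a; b; c; d].
  by rewrite /= !inE !negb_or ac bd (eq_sym a d) !edge_neq.
have [ba cb dc ad] : [/\ e b a, e c b, e d c & e a d] by split; rewrite e_sym.
case/or3P: (cyclic4_cases (uniq_map_f abcd)) => [|| /or4P[]] h.
- by case/negP: (square_not_in_order ab bc cd da).
- by case/negP: (square_not_crossed ab bc cd da).
- by case/negP: (square_not_crossed cb ba ad dc); rewrite cyclic4_rot.
- by case/negP: (square_not_crossed cd da ab bc); rewrite cyclic4_rot.
- by case/negP: (square_not_crossed ad dc cb ba).
- by case/negP: (square_not_in_order ad dc cb ba).
Qed.

Lemma path_not_in_order x y z w : e x y -> e y z -> e z w ->
  ~~ e x z -> ~~ e y w -> ~~ e x w -> ~~ cyclic4 (f x) (f y) (f z) (f w).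
Proof.
move=> xy yz zw /negbTE xz /negbTE yw /negbTE xw; apply/negP => xyzw.
apply: (no_CF_pattern4 (es := cf_path)) xyzw _; first by rewrite !inE eqxx !orbT.
pattern_adjacency.
Qed.

Lemma path_not_crossed x y z w : e x y -> e y z -> e z w ->
  ~~ e x z -> ~~ e y w -> ~~ e x w -> ~~ cyclic4 (f y) (f w) (f x) (f z).
Proof.
move=> xy yz zw /negbTE xz /negbTE yw /negbTE xw; apply/negP => ywxz.
apply: (no_CF_pattern4 (es := cf_crossed_path)) ywxz _; first by rewrite !inE eqxx !orbT.
pattern_adjacency.
Qed.

Lemma P4_separated a b c d : e a b -> e b c -> e c d ->
  ~~ e a c -> ~~ e b d -> ~~ e a d -> separates (f b) (f c) (f a) (f d).
Proof.
move=> ab bc cd ac bd ad.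
have abcd : uniq [:: a; b; c; d].
  rewrite /= !inE !negb_or (edge_neq ab) (edge_neq bc) (edge_neq cd) /= !andbT -andbA.
  apply/and3P; split.
  - by apply: contraNneq ad => ->.
  - by apply: contraNneq ac => ->; rewrite e_sym.
  - by apply: contraNneq ad => <-.
have [ba cb dc] : [/\ e b a, e c b & e d c] by split; rewrite e_sym.
have [ca db da] : [/\ ~~ e c a, ~~ e d b & ~~ e d a] by split; rewrite e_sym.
rewrite /separates; case/or3P: (cyclic4_cases (uniq_map_f abcd)) => [|| /or4P[]] h.
- by case/negP: (path_not_in_order ab bc cd ac bd ad).
- by rewrite (cyclic4_rot h) orbT.
- by case/negP: (path_not_crossed ab bc cd ac bd ad); do 2 apply: cyclic4_rot.
- by rewrite (cyclic4_rot (cyclic4_rot (cyclic4_rot h))).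
- by case/negP: (path_not_crossed dc cb ba db ca da); do 3 apply: cyclic4_rot.
- by case/negP: (path_not_in_order dc cb ba db ca da); apply: cyclic4_rot.
Qed.

Lemma far_neighbour_separated v x x' y : e v x -> e x x' -> x' != v ->
  e v y -> y != x -> separates (f v) (f x) (f y) (f x').
Proof.
move=> vx xx' x'v vy yx; have yv : e y v by rewrite e_sym.
apply: P4_separated => //; apply/negP.
- by move=> yx_edge; apply: (no_triangle yx_edge) vy; rewrite e_sym.
- by move=> vx'; apply: (no_triangle vx' (_ : e x' x)); rewrite e_sym.
- move=> yx'; apply: (no_square yv vx xx') => //; first by rewrite e_sym.
  by rewrite eq_sym.
Qed.

Lemma CF_free_claw_has_leaf v a b c : e v a -> e v b -> e v c ->
  uniq [:: a; b; c] -> [|| deg e a == 1, deg e b == 1 | deg e c == 1].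
Proof.
move=> va vb vc abc; apply/negPn/negP; rewrite !negb_or => /and3P[da db dc].
have opposite x : e v x -> deg e x != 1 -> exists x',
    forall y, e v y -> y != x -> separates (f v) (f x) (f y) (f x').
  move=> vx dx; have [x' xx' x'v] : exists2 x', e x x' & x' != v.
    by apply: other_neighbour dx _; rewrite e_sym.
  by exists x' => y vy yx; apply: far_neighbour_separated.
have vabc : uniq [:: v; a; b; c].
  by rewrite cons_uniq abc andbT !inE !negb_or (edge_neq va) (edge_neq vb) (edge_neq vc).
move: abc; rewrite /= !inE !negb_or andbT => /andP[/andP[ab ac] bc].
have [ba ca cb] : [/\ b != a, c != a & c != b] by rewrite !(eq_sym c) eq_sym.
case/or3P: (separates_middle (uniq_map_f vabc)) => middle.
- have [a' sep] := opposite a va da.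
  by have /negP := separates_same_side (sep b vb ba) (sep c vc ca).
- have [b' sep] := opposite b vb db.
  by have /negP := separates_same_side (sep a va ab) (sep c vc cb).
- have [c' sep] := opposite c vc dc.
  by have /negP := separates_same_side (sep a va ac) (sep b vb bc).
Qed.

Lemma shortest_cycle_short c : graph_cycle e c ->
  (forall s, graph_cycle e s -> size c <= size s) -> size c <= 4.
Proof.
move=> cyc shortest; rewrite leqNgt; apply/negP => c5.
have [x0 _] : exists x0 : T, x0 \in c.
  by case: c {cyc shortest} c5 => // x0 s _; exists x0; rewrite mem_head.
(* [x k] labels the k-th vertex of c; four consecutive vertices of a shortest
   cycle of length at least 5 induce a path. *)
pose x k := f (head x0 (rot k c)).
suff: x (size c) != x 0 by rewrite /x rot_size rot0 eqxx.
apply: separates_winding => [|k k3]; first lia.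
rewrite /x (@rotS _ k.+2) 1?(@rotS _ k.+1) 1?(@rotS _ k); try lia.
have := graph_cycle_rot e k c; rewrite cyc; have := size_rot k c.
have : forall s, graph_cycle e s -> size (rot k c) <= size s by rewrite size_rot.
case: (rot k c) => [|a [|b [|c' [|d r]]]] shortest_k /= size_k cyc_k;
  rewrite -size_k /= in c5; try lia.
have r0 : r != [::] by case: r {shortest_k cyc_k size_k} c5.
have [ac bd ad] := shortest_cycle_chordless cyc_k r0 shortest_k.
case/and3P: cyc_k => _ _ /= /and4P[ab bc cd _].
by rewrite /rot /=; apply: P4_separated.
Qed.

Lemma CF_free_acyclic c : ~~ graph_cycle e c.
Proof.
apply/negP => /shortest_seq[s cyc shortest]; have := shortest_cycle_short cyc shortest.
case/and3P: cyc {shortest}; case: s => [|a [|b [|c' [|d [|y r]]]]] //= s_uniq _.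
- by rewrite andbT => /and3P[ab bc ca]; case: (no_triangle ab bc ca).
- rewrite andbT => /and4P[ab bc cd da] _; apply: (no_square ab bc cd da).
  + by move: s_uniq; rewrite !inE !negb_or => /and4P[/and3P[]].
  + by move: s_uniq; rewrite !inE !negb_or => /and4P[_ /andP[]].
Qed.

End CFFree.

Lemma CF_free_caterpillar_forest (T : finType) (e : rel T) (f : T -> nat) :
  symmetric e -> irreflexive e -> CF_free_circular_ordering e f -> caterpillar_forest e.
Proof.
move=> e_sym e_irr [f_inj CF_free]; apply: acyclic_caterpillar_forest => //.
  exact: (CF_free_acyclic e_sym e_irr f_inj CF_free).
exact: (CF_free_claw_has_leaf e_sym e_irr f_inj CF_free).
Qed.

(** * The zigzag ordering of a caterpillar forest *)

(* Spine vertex k goes to 2k or to B - 2k according to the parity of k, so the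
   spine edges are nested chords zigzagging across the circle; a leaf of spine
   vertex k goes to 2k + 1 or B - 2k - 1, on the far side, next to vertex k + 1. *)
Definition zigzag (B k : nat) (leaf : bool) : nat :=
  if odd (k + leaf) then B - (k.*2 + leaf) else k.*2 + leaf.

Lemma zigzag_separates B i ka la kd ld : 4 * i.+2 <= B ->
  (if la then ka = i else ka.+1 = i) -> (if ld then kd = i.+1 else kd = i.+2) ->
  separates (zigzag B i false) (zigzag B i.+1 false) (zigzag B ka la) (zigzag B kd ld).
Proof.
move=> iB; case: la; case: ld => /= ? ?; subst.
all: rewrite /zigzag /separates /cyclic4 /cyclic3 ?addn0 ?addn1 /= ?addnS ?negbK.
all: by case: (odd _) => /=; lia.
Qed.

Lemma ltn_lex N x y rx ry : rx < N -> ry < N ->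
  (x * N + rx < y * N + ry) = (x < y) || (x == y) && (rx < ry).
Proof.
move=> rxN ryN; case: (ltngtP x y) => [xy|yx|->]; rewrite ?ltn_add2l //=.
- nia.
- nia.
Qed.

Lemma separates_lex N u v w z ru rv rw rz : ru < N -> rv < N -> rw < N -> rz < N ->
  separates u v w z -> separates (u * N + ru) (v * N + rv) (w * N + rw) (z * N + rz).
Proof.
by move=> ? ? ? ?; rewrite /separates /cyclic4 /cyclic3 !(@ltn_lex N) //; lia.
Qed.

Section Caterpillar.
Variables (T : finType) (e : rel T).
Hypothesis e_sym : symmetric e.
Hypothesis caterpillars : caterpillar_forest e.

Lemma caterpillar_acyclic c : ~~ graph_cycle e c.
Proof.
apply/negP; case: c => [//|x s] /and3P[s_uniq s_size s_cycle].
have [[_ _ no_cycle] _] := caterpillars x; apply: no_cycle.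
exists (x :: s); split=> //; apply/allP => y ys; rewrite mem_component.
by apply: (path_connect s_cycle); rewrite inE mem_rcons ys orbT.
Qed.

Definition is_spine (C : {set T}) (p : seq T) : bool :=
  [&& uniq p, nonleaves e C == [set y in p] &
      [forall u in nonleaves e C, forall v in nonleaves e C, e u v == consec p u v]].

Lemma spine_exists x : exists p, is_spine (component e x) p.
Proof.
have [_ [p [p_uniq Sp p_adj]]] := caterpillars x; exists p.
rewrite /is_spine p_uniq Sp eqxx /=; apply/forall_inP => u uS; apply/forall_inP => v vS.
by rewrite p_adj ?eqxx // Sp.
Qed.

Definition spine x : seq T := xchoose (spine_exists x).

Lemma spineP x : [/\ uniq (spine x), nonleaves e (component e x) = [set y in spine x] &
  {in nonleaves e (component e x) &, forall u v, e u v = consec (spine x) u v}].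
Proof.
have /and3P[p_uniq /eqP Sp /forall_inP p_adj] := xchooseP (spine_exists x).
by split=> // u v uS vS; have /forall_inP/(_ v vS)/eqP := p_adj u uS.
Qed.

Lemma spine_edge x y : e x y -> spine y = spine x.
Proof. by move=> xy; apply: eq_xchoose => p; rewrite (component_edge e_sym xy). Qed.

Lemma mem_spine x : (x \in spine x) = (deg e x != 1).
Proof.
have [_ /setP/(_ x) Sp _] := spineP x.
by rewrite !inE connect0 /= in Sp; rewrite Sp.
Qed.

Lemma spine_consec u v : e u v -> u \in spine u -> v \in spine v ->
  consec (spine u) u v.
Proof.
move=> uv uS vS; have [_ Sp p_adj] := spineP u.
by rewrite -p_adj ?Sp ?inE // -(spine_edge uv).
Qed.

Definition spine_index x : nat :=
  if x \in spine x then index x (spine x) else find (e x) (spine x).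

Lemma leaf_spine_index x y : e x y -> x \notin spine x ->
  spine_index x = index y (spine x).
Proof.
move=> xy; rewrite /spine_index mem_spine negbK => /eqP dx.
by rewrite ifN ?mem_spine ?dx //; apply: eq_find; apply: leaf_edge dx xy.
Qed.

Lemma size_spine x : size (spine x) <= #|T|.
Proof. by have [p_uniq _ _] := spineP x; rewrite -(card_uniqP p_uniq) max_card. Qed.

Definition slot x : nat := zigzag (4 * #|T|) (spine_index x) (x \notin spine x).

(* [enum_rank] only breaks ties between leaves of a common spine vertex. *)
Definition label x : nat := slot x * #|T| + enum_rank x.

Lemma label_inj : injective label.
Proof.
move=> x y /(congr1 (modn^~ #|T|)); rewrite !modnMDl !modn_small ?ltn_ord //.
by move/val_inj/enum_rank_inj.
Qed.

Lemma P4_slot_separated_oriented a b c d : e a b -> e b c -> e c d ->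
  ~~ e a c -> ~~ e b d -> ~~ e a d -> (index b (spine b)).+1 = index c (spine b) ->
  separates (slot b) (slot c) (slot a) (slot d).
Proof.
move=> ab bc cd ac bd ad bc_index.
have [pa pc pd] : [/\ spine a = spine b, spine c = spine b & spine d = spine b].
  by split; rewrite -?(spine_edge ab) ?(spine_edge cd) ?(spine_edge bc).
set p := spine b in pa pc pd bc_index *.
have [p_uniq _ _] := spineP b.
have idx_inj u v : u \in p -> v \in p -> index u p = index v p -> u = v.
  by move=> up vp uv; rewrite -(nth_index u up) uv nth_index.
have ac' : a != c by apply: contraNneq ad => ->.
have bd' : b != d by apply: contraNneq ad => <-.
have bp : b \in p by rewrite /p mem_spine (deg_neq1 (a := a) (b := c)) // e_sym.
have cp : c \in p by rewrite -pc mem_spine (deg_neq1 (a := b) (b := d)) // e_sym.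
have Ha : if a \notin p then spine_index a = index b p
          else (spine_index a).+1 = index b p.
  rewrite -pa; case: ifPn => [aNp | /negPn ap]; first exact: leaf_spine_index ab aNp.
  have := spine_consec ab ap bp; rewrite /spine_index ap pa /consec.
  rewrite pa in ap; rewrite ap bp /= => /orP[/eqP-> // | /eqP ba].
  by case/eqP: ac'; apply: idx_inj; rewrite // -ba.
have Hd : if d \notin p then spine_index d = (index b p).+1
          else spine_index d = (index b p).+2.
  rewrite -pd; case: ifPn => [dNp | /negPn dp].
    by rewrite (@leaf_spine_index d c) // ?pd ?bc_index // e_sym.
  have cS : c \in spine c by rewrite pc.
  have := spine_consec cd cS dp; rewrite /spine_index dp pd pc /consec.
  rewrite pd in dp; rewrite dp cp -bc_index /= => /orP[/eqP<- // | /eqP/succn_inj db].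
  by case/eqP: bd'; apply: idx_inj; rewrite // db.
have bound : 4 * (index b p).+2 <= 4 * #|T|.
  have := size_spine b; rewrite -/p; have := cp; rewrite -index_mem -bc_index.
  by rewrite leq_pmul2l //; apply: leq_trans.
have [sb sc] : slot b = zigzag (4 * #|T|) (index b p) false /\
               slot c = zigzag (4 * #|T|) (index b p).+1 false.
  by rewrite /slot /spine_index pc bp cp bc_index.
by rewrite sb sc /slot pa pd; apply: zigzag_separates.
Qed.

Lemma P4_label_separated a b c d : e a b -> e b c -> e c d ->
  ~~ e a c -> ~~ e b d -> ~~ e a d -> separates (label b) (label c) (label a) (label d).
Proof.
move=> ab bc cd ac bd ad; apply: separates_lex; try exact: ltn_ord.
have ac' : a != c by apply: contraNneq ad => ->.
have bd' : b != d by apply: contraNneq ad => <-.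
have bp : b \in spine b by rewrite mem_spine (deg_neq1 (a := a) (b := c)) // e_sym.
have cp : c \in spine c by rewrite mem_spine (deg_neq1 (a := b) (b := d)) // e_sym.
have := spine_consec bc bp cp.
rewrite /consec bp -(spine_edge bc) cp /= (spine_edge bc) => /orP[] /eqP bc_index.
  exact: P4_slot_separated_oriented.
rewrite separatesC separatesCr.
by apply: P4_slot_separated_oriented; rewrite // ?(spine_edge bc) // e_sym.
Qed.

Lemma caterpillar_CF_free : CF_free_circular_ordering e label.
Proof.
split=> [|H]; first exact: label_inj.
rewrite !inE => /or4P[| | |/orP[]] /eqP-> /contains_patternP[s [s_uniq s_size s_cw] s_adj];
  case: s s_uniq s_size s_cw s_adj => [|a [|b [|c [|d [|? ?]]]]] s_uniq // _ s_cw s_adj.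
- case/negP: (caterpillar_acyclic [:: a; b; c]).
  by rewrite /graph_cycle s_uniq /= (s_adj a 0 1) ?(s_adj a 1 2) ?(s_adj a 2 0).
- case/negP: (caterpillar_acyclic [:: a; b; c; d]).
  rewrite /graph_cycle s_uniq /=.
  by rewrite (s_adj a 0 1) ?(s_adj a 1 2) ?(s_adj a 2 3) ?(s_adj a 3 0).
- case/negP: (caterpillar_acyclic [:: a; b; d; c]).
  have dc_cd : perm_eq [:: a; b; d; c] [:: a; b; c; d].
    by rewrite !perm_cons (perm_catC [:: d]).
  rewrite /graph_cycle (perm_uniq dc_cd) s_uniq /=.
  by rewrite (s_adj a 0 1) ?(s_adj a 1 3) ?(s_adj a 3 2) ?(s_adj a 2 0).
- move/clockwise4/cyclic4_not_separates/negP: s_cw; apply.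
  by apply: P4_label_separated; rewrite ?(s_adj a 0 1) ?(s_adj a 1 2) ?(s_adj a 2 3)
    ?(s_adj a 0 2) ?(s_adj a 1 3) ?(s_adj a 0 3).
- move/clockwise4/cyclic4_rot/cyclic4_rot/cyclic4_not_separates/negP: s_cw; apply.
  rewrite separatesC; apply: (@P4_label_separated c a d b);
  by rewrite ?(s_adj a 2 0) ?(s_adj a 0 3) ?(s_adj a 3 1)
    ?(s_adj a 2 3) ?(s_adj a 0 1) ?(s_adj a 2 1).
Qed.

End Caterpillar.

Theorem proposition6 (T : finType) (e : rel T) :
  simple_graph e ->
  (caterpillar_forest e <-> exists f : T -> nat, CF_free_circular_ordering e f).
Proof.
case=> e_sym e_irr; split=> [caterpillars | [f f_CF_free]].
  by exists (label caterpillars); apply: caterpillar_CF_free.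
exact: CF_free_caterpillar_forest f_CF_free.
Qed.
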